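(* For arbitrarily large values of $|V|$ there exists a partition exchange economy with pairwise exchanges and only $n=3$ organizations whose $\big(\tfrac{|V|}{18}-3\big)$-supplemented core is empty.
   Context: Pairwise partition exchange economy: a set of organizations $N=\{1,\dots,n\}$; pairwise disjoint finite sets $V^1,\dots,V^n$, $V=\bigcup_i V^i$; subsets $U^i\subseteq V^i$ (patient vertices of organization $i$); an undirected (mutual) compatibility graph $\mathcal G=(V,E)$. An exchange among $W\subseteq V$ is a matching of $\mathcal G[W]$. The utility $u_i(M)$ of organization $i$ from a matching $M$ is the number of vertices of $U^i$ covered by $M$. Given a finite set $V^0$ of new vertices (additional altruistic donors, belonging to no organization), $\mathcal G^{+V^0}$ is obtained by adding the vertices of $V^0$, each joined by edges to an arbitrarily chosen set of vertices of $V$; exchanges in $\mathcal G^{+V^0}$ are its matchings. A nonempty coalition $P\subseteq N$ blocks a matching $M$ if there is a matching $M'$ of $\mathcal G[\bigcup_{i\in P}V^i]$ with $u_i(M')>u_i(M)$ for all $i\in P$. $M$ is in the $V^0$-supplemented core if it is a matching of $\mathcal G^{+V^0}$ blocked by no nonempty coalition. The $d$-supplemented core is nonempty if there exist a set $V^0$ with $|V^0|\le d$, a choice of its edges, and a matching in the $V^0$-supplemented core; otherwise it is empty. *)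

From mathcomp Require Import all_boot all_order all_algebra.
Set Implicit Arguments. Unset Strict Implicit. Unset Printing Implicit Defensive.
Import Order.TTheory GRing.Theory Num.Theory.

Definition is_matching (T : finType) (adj : rel T) (M : {set {set T}}) : Prop :=
  trivIset M /\ forall E, E \in M -> exists x y, adj x y /\ E = [set x; y].

Section Economy.
Variables (V : finType) (n : nat) (org : V -> 'I_n) (U : {set V}) (e : rel V).

(* Graph G^{+V^0}: V^0 = 'I_k; new vertex j is joined exactly to f j. *)
Definition suppl_adj (k : nat) (f : 'I_k -> {set V}) : rel (V + 'I_k) :=
  fun a b => match a, b with
  | inl x, inl y => e x y
  | inl x, inr j => x \in f j
  | inr j, inl x => x \in f j
  | inr _, inr _ => false
  end.

Definition utility (i : 'I_n) (C : {set V}) : nat :=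
  #|[set v in U | (org v == i) && (v \in C)]|.

Definition covered_V (k : nat) (M : {set {set (V + 'I_k)}}) : {set V} :=
  [set v | inl v \in cover M].

Definition blocks (P : {set 'I_n}) (C : {set V}) : Prop :=
  exists M' : {set {set V}},
    is_matching e M' /\
    (forall E, E \in M' -> forall v, v \in E -> org v \in P) /\
    (forall i, i \in P -> utility i C < utility i (cover M')).

Definition in_suppl_core (k : nat) (f : 'I_k -> {set V})
    (M : {set {set (V + 'I_k)}}) : Prop :=
  is_matching (suppl_adj f) M /\
  forall P : {set 'I_n}, P != set0 -> ~ blocks P (covered_V M).

(* The d-supplemented core is nonempty (d real; here rational). *)
Definition suppl_core_nonempty (d : rat) : Prop :=
  exists (k : nat) (f : 'I_k -> {set V}) (M : {set {set (V + 'I_k)}}),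
    (k%:R <= d)%R /\ in_suppl_core f M.

End Economy.

(* The economy consists of t disjoint copies of a gadget made of four
   triangles of patients: for each organization i a triangle T_i with two
   vertices of i and one of i + 1, and a triangle with one vertex of each
   organization.  A triangle is odd and has no edge leaving it, so a matching
   of the supplemented graph covers at most two of its vertices besides those
   matched to the k new donors: at most 8t + k patients are covered.
   Conversely organization i alone can secure 2t patients, and for every
   0 <= Y <= t the coalition {i, i + 1} can secure 3t - Y for i and 3t + Y for
   i + 1.  In a core matching the utilities u_i therefore satisfy
   u_0 + u_1 + u_2 >= 9t - 1, hence k >= t - 1, whereas |V| = 12t only
   allows k <= 2t/3 - 3. *)

From mathcomp Require Import all_boot all_order all_algebra.
From mathcomp Require Import zify lra.
Set Implicit Arguments. Unset Strict Implicit. Unset Printing Implicit Defensive.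
Import GRing.Theory Num.Theory.

Section Matchings.
Variables (T : finType) (adj : rel T).

Lemma matching_edge_eq M E1 E2 x : is_matching adj M ->
  E1 \in M -> E2 \in M -> x \in E1 -> x \in E2 -> E1 = E2.
Proof.
case=> /trivIsetP disjM _ E1M E2M xE1 xE2; apply/eqP; apply: contraT => neqE.
by rewrite (disjointFr (disjM _ _ E1M E2M neqE) xE1) in xE2.
Qed.

Definition involution_matching (p : T -> T) : {set {set T}} :=
  [set [set x; p x] | x in [set x | p x != x]].

Variable p : T -> T.
Hypothesis pK : involutive p.

Lemma involution_pairE x y : y \in [set x; p x] -> [set x; p x] = [set y; p y].
Proof. by case/set2P=> ->; rewrite ?pK // setUC. Qed.

Lemma cover_involution_matching : cover (involution_matching p) = [set x | p x != x].
Proof.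
rewrite cover_imset; apply/setP=> y; apply/bigcupP/idP => [[x x_moved /set2P[]->] | y_moved].
- by [].
- by rewrite !inE pK eq_sym in x_moved *.
- by exists y => //; rewrite !inE eqxx.
Qed.

Lemma involution_matchingP :
  (forall x, p x != x -> adj x (p x)) -> is_matching adj (involution_matching p).
Proof.
move=> adj_p; split.
  apply/trivIsetP=> _ _ /imsetP[x _ ->] /imsetP[y _ ->] neq_xy.
  rewrite -setI_eq0; apply: contraNT neq_xy => /set0Pn[z /setIP[zx zy]].
  by rewrite (involution_pairE zx) (involution_pairE zy).
move=> E /imsetP[x x_moved ->]; exists x, (p x); split=> //.
by apply: adj_p; rewrite inE in x_moved.
Qed.

End Matchings.

Lemma card_fibers (V B : finType) (blk : V -> B) (A : {set V}) :
  #|A| = \sum_b #|A :&: [set v | blk v == b]|.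
Proof.
rewrite -sum1_card (partition_big blk xpredT) //=; apply: eq_bigr => b _.
by rewrite -sum1_card; apply: eq_bigl => v; rewrite !inE.
Qed.

Lemma card_set_prod (A B : finType) (P : A -> B -> bool) :
  #|[set v : A * B | P v.1 v.2]| = \sum_a #|[set b | P a b]|.
Proof.
rewrite (card_fibers fst); apply: eq_bigr => a _.
have pair_inj : injective (fun b : B => (a, b)) by move=> b b' [].
rewrite -(card_imset _ pair_inj); apply: eq_card => -[a' b]; rewrite !inE /=.
apply/andP/imsetP => [[Pab /eqP a'a] | [b'' Pb [-> ->]]].
  by subst a'; exists b; rewrite ?inE.
by rewrite inE in Pb; rewrite eqxx.
Qed.

Section Blocking.
Variables (V : finType) (n : nat) (org : V -> 'I_n) (U : {set V}) (e : rel V).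

Lemma involution_blocks (P : {set 'I_n}) (C : {set V}) (p : V -> V) :
  involutive p -> (forall v, p v != v -> e v (p v) && (org v \in P)) ->
  (forall i, i \in P -> utility org U i C < utility org U i [set v | p v != v]) ->
  blocks org U e P C.
Proof.
move=> pK p_ok gain; exists (involution_matching p); split.
  by apply: involution_matchingP => // v /p_ok /andP[].
split; last by rewrite cover_involution_matching.
move=> E /imsetP[v]; rewrite inE => v_moved -> w /set2P[]->.
  by case/andP: (p_ok v v_moved).
by have /p_ok/andP[] : p (p v) != p v by rewrite pK eq_sym.
Qed.

Lemma sum_utility_setT (C : {set V}) : \sum_i utility org setT i C = #|C|.
Proof.
rewrite (card_fibers org); apply: eq_bigr => i _.
by apply: eq_card => v; rewrite !inE andTb andbC.
Qed.

End Blocking.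

Section SupplementedMatching.
Variables (V : finType) (e : rel V).
Hypotheses (e_sym : symmetric e) (e_irr : irreflexive e).
Variables (k : nat) (f : 'I_k -> {set V}) (M : {set {set (V + 'I_k)}}).
Hypothesis matchingM : is_matching (suppl_adj e f) M.

Definition donor_matched : {set V} := [set v | [exists j, [set inl v; inr j] \in M]].

Lemma card_donor_matched : #|donor_matched| <= k.
Proof.
pose partner j := [pick v | [set inl v; inr j] \in M].
have sub_partner : Some @: donor_matched \subset partner @: [set: 'I_k].
  apply/subsetP=> x /imsetP[v]; rewrite inE => /existsP[j vj] ->.
  apply/imsetP; exists j; rewrite // /partner.
  case: pickP => [w wj | /(_ v)]; last by rewrite vj.
  have vw := matching_edge_eq matchingM vj wj (set22 _ _) (set22 _ _).
  have : inl v \in [set inl w; inr j] by rewrite -vw set21.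
  by case/set2P=> [[->] |].
rewrite -(card_imset _ (@Some_inj _)); apply: leq_trans (subset_leq_card sub_partner) _.
by rewrite (leq_trans (leq_imset_card _ _)) // cardsT card_ord.
Qed.

Lemma card_matching_edge E : E \in M -> #|E| = 2.
Proof.
case: matchingM => _ /[apply] -[a [b [ab ->]]].
rewrite cards2; case: (a =P b) ab => [-> | //].
by case: b => [v | j] //=; rewrite e_irr.
Qed.

Lemma covered_partner v : v \in covered_V M -> v \notin donor_matched ->
  exists2 w, e v w & [set inl v; inl w] \in M.
Proof.
rewrite inE => /bigcupP[E EM vE] v_inner.
case: matchingM => _ /(_ E EM) [a [b [ab Eab]]]; subst E.
case/set2P: vE => va; subst.
- case: b ab EM => [w | j] /= vw EM; first by exists w.
  by case/negP: v_inner; rewrite inE; apply/existsP; exists j.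
- case: a ab EM => [w | j] /= wv EM; first by exists w; rewrite 1?setUC // e_sym.
  by case/negP: v_inner; rewrite inE; apply/existsP; exists j; rewrite setUC.
Qed.

Lemma even_card_inner_covered (S : {set V}) :
  (forall v w, v \in S -> e v w -> w \in S) ->
  ~~ odd #|S :&: covered_V M :\: donor_matched|.
Proof.
move=> closedS; set W := _ :\: _.
(* The edges of [M] inside [S] pair up the vertices of [W]. *)
pose MS := [set E in M | E \subset inl @: S].
have MS_M : MS \subset M by apply/subsetP=> E; rewrite inE => /andP[].
have coverMS : cover MS = inl @: W.
  apply/setP=> x; apply/bigcupP/imsetP => [[E] | [v]].
  - rewrite inE => /andP[EM /subsetP ES] xE.
    have /imsetP[v vS xv] := ES x xE; subst x.
    exists v => //; rewrite !inE vS; apply/and3P; split=> //.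
      apply/existsP=> -[j vj].
      have Ej := matching_edge_eq matchingM vj EM (set21 _ _) xE.
      have /imsetP[? _ //] : inr j \in inl @: S by apply: ES; rewrite -Ej set22.
    by apply/bigcupP; exists E.
  - rewrite /W in_setD in_setI => /and3P[v_inner vS v_cov] ->.
    have [w vw vwM] := covered_partner v_cov v_inner.
    exists [set inl v; inl w]; last exact: set21.
    rewrite inE vwM; apply/subsetP=> y /set2P[]->; apply: imset_f => //.
    exact: closedS vw.
have /eqP trivMS := trivIsetS MS_M matchingM.1.
rewrite -(card_imset W (@inl_inj V 'I_k)) -coverMS -trivMS.
rewrite (eq_bigr (fun _ => 2)) => [|E /(subsetP MS_M) /card_matching_edge //].
by rewrite sum_nat_const muln2 odd_double.
Qed.

Lemma card_covered_odd_closed (S : {set V}) :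
  (forall v w, v \in S -> e v w -> w \in S) -> odd #|S| ->
  #|covered_V M :&: S| < #|S| + #|donor_matched :&: S|.
Proof.
move=> closedS oddS.
have [DS0 | /set0Pn[v vDS]] := eqVneq (donor_matched :&: S) set0; last first.
  rewrite -addn1 leq_add ?subset_leq_card ?subsetIr // card_gt0.
  by apply/set0Pn; exists v.
have inner_all : S :&: covered_V M :\: donor_matched = covered_V M :&: S.
  apply/setP=> v; rewrite in_setD !in_setI.
  case: (boolP (v \in S)) => vS; rewrite ?andbF // andbT.
  suff -> : v \notin donor_matched by [].
  apply/negP=> vD; have : v \in donor_matched :&: S by rewrite inE vD vS.
  by rewrite DS0 inE.
rewrite DS0 cards0 addn0 ltn_neqAle subset_leq_card ?subsetIr // andbT.
apply: contraNneq (even_card_inner_covered closedS) => card_eq.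
by rewrite inner_all card_eq.
Qed.

Lemma card_covered_odd_blocks (B : finType) (blk : V -> B) :
  (forall v w, e v w -> blk v = blk w) -> (forall b, odd #|[set v | blk v == b]|) ->
  #|covered_V M| + #|B| <= #|V| + k.
Proof.
move=> e_blk odd_blk.
have -> : #|B| = \sum_(b : B) 1 by rewrite sum1_card.
rewrite -[#|V|]cardsT (card_fibers blk (covered_V M)) (card_fibers blk setT) -big_split /=.
apply: leq_trans (leq_add (leqnn _) card_donor_matched).
rewrite (card_fibers blk donor_matched) -big_split /=; apply: leq_sum => b _.
rewrite setTI addn1; apply: card_covered_odd_closed => // v w.
by rewrite !inE => /eqP <- /e_blk ->.
Qed.

End SupplementedMatching.

Lemma sum_threshold t Y a b : Y <= t ->
  \sum_(j < t) (if j < Y then a else b) = Y * a + (t - Y) * b.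
Proof.
move=> Y_le_t; rewrite -(big_mkord xpredT (fun j => if j < Y then a else b)).
rewrite (big_cat_nat (leq0n Y) Y_le_t) /=.
rewrite (@eq_big_nat _ _ _ 0 Y _ (fun=> a)) => [|j /andP[_ ->] //].
rewrite (@eq_big_nat _ _ _ Y t _ (fun=> b)) => [|j /andP[]]; last first.
  by rewrite leqNgt => /negbTE->.
by rewrite !sum_nat_const_nat subn0 mulnC [(t - Y) * b]mulnC.
Qed.

(* [(Some i, c)] is vertex [c] of the triangle [T_i], whose vertices [0] and [1]
   belong to organization [i] and vertex [2] to [i + 1]; [(None, c)] is vertex
   [c] of the fourth triangle and belongs to organization [c]. *)
Definition gadget := (option 'I_3 * 'I_3)%type.
Definition gadget_adj : rel gadget := fun x y => (x.1 == y.1) && (x.2 != y.2).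
Definition owner (x : gadget) : 'I_3 :=
  if x.1 is Some i then (if x.2 == 2%R then (i + 1)%R else i) else x.2.

(* Explicit enumerations, so that [vm_compute] can check facts about the gadget:
   the library enumeration of a finite type is locked. *)
Definition ord3_enum : seq 'I_3 := [:: 0; 1; 2]%R.
Definition gadget_enum : seq gadget :=
  [seq (r, c) | r <- None :: map Some ord3_enum, c <- ord3_enum].

Lemma mem_ord3_enum i : i \in ord3_enum.
Proof. by rewrite -(mem_map val_inj); case: i => -[|[|[|]]]. Qed.

Lemma mem_gadget_enum x : x \in gadget_enum.
Proof.
case: x => r c; apply/allpairsP; exists (r, c); split; rewrite ?mem_ord3_enum //.
by case: r => [i|]; rewrite in_cons ?(mem_map (@Some_inj _)) ?mem_ord3_enum ?orbT.
Qed.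

Lemma card_gadget (P : pred gadget) : #|[set x | P x]| = count P gadget_enum.
Proof.
have /permP -> : perm_eq gadget_enum (enum {: gadget}).
  apply: uniq_perm; rewrite ?enum_uniq //.
  by move=> x; rewrite mem_enum mem_gadget_enum.
by rewrite cardsE cardE enumT -size_filter.
Qed.

Lemma all_gadgetP (P : pred gadget) : reflect (forall x, P x) (all P gadget_enum).
Proof. by apply: (iffP allP) => P_all x; rewrite ?P_all ?mem_gadget_enum. Qed.

Definition swap (x y : gadget) : gadget -> gadget := [fun z => z with x |-> y, y |-> x].

Definition solo_swap (i : 'I_3) : gadget -> gadget := swap (Some i, 0%R) (Some i, 1%R).
Definition pair_swap (i c : 'I_3) : gadget -> gadget :=
  swap (Some i, 0%R) (Some i, c) \o swap (Some (i + 1)%R, 0%R) (Some (i + 1)%R, 1%R)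
    \o swap (None, i) (None, (i + 1)%R).

Definition coalition_swap (P : pred 'I_3) (s : gadget -> gadget) : bool :=
  all (fun x => (s (s x) == x) && ((s x != x) ==> gadget_adj x (s x) && P (owner x)))
    gadget_enum.

Definition gain (i : 'I_3) (s : gadget -> gadget) : nat :=
  count (fun x => (owner x == i) && (s x != x)) gadget_enum.

Lemma solo_swap_spec i :
  coalition_swap (pred1 i) (solo_swap i) && (gain i (solo_swap i) == 2).
Proof. by case: i => -[|[|[|]]] // ?; vm_compute. Qed.

Lemma balanced_pair_swap_spec i (j := (i + 1)%R) :
  [&& coalition_swap (pred2 i j) (pair_swap i 1%R),
      gain i (pair_swap i 1%R) == 3 & gain j (pair_swap i 1%R) == 3].
Proof. by case: i @j => -[|[|[|]]] // ?; vm_compute. Qed.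

Lemma skewed_pair_swap_spec i (j := (i + 1)%R) :
  [&& coalition_swap (pred2 i j) (pair_swap i 2%R),
      gain i (pair_swap i 2%R) == 2 & gain j (pair_swap i 2%R) == 4].
Proof. by case: i @j => -[|[|[|]]] // ?; vm_compute. Qed.

Lemma coalition_swapP P s : coalition_swap P s ->
  involutive s /\ forall x, s x != x -> gadget_adj x (s x) && P (owner x).
Proof.
move/all_gadgetP=> s_ok; split=> x; first by have /andP[/eqP] := s_ok x.
by have /andP[_ /implyP] := s_ok x.
Qed.

Section Copies.
Variable t : nat.

Definition copies_org (v : 'I_t * gadget) : 'I_3 := owner v.2.
Definition copies_adj : rel ('I_t * gadget) := fun v w => (v.1 == w.1) && gadget_adj v.2 w.2.

Lemma copies_adj_sym : symmetric copies_adj.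
Proof.
by move=> v w; rewrite /copies_adj /gadget_adj eq_sym (eq_sym v.2.1) (eq_sym v.2.2).
Qed.

Lemma copies_adj_irr : irreflexive copies_adj.
Proof. by move=> v; rewrite /copies_adj /gadget_adj !eqxx andbF. Qed.

Lemma copies_blocks (P : pred 'I_3) (s : 'I_t -> gadget -> gadget) (C : {set 'I_t * gadget}) :
  (forall j, coalition_swap P (s j)) ->
  (forall i, P i -> utility copies_org setT i C < \sum_j gain i (s j)) ->
  blocks copies_org setT copies_adj [set i | P i] C.
Proof.
move=> s_ok gainP; pose p v := (v.1, s v.1 v.2).
have moved v : (p v != v) = (s v.1 v.2 != v.2) by case: v => j x; rewrite /p xpair_eqE eqxx.
apply: (involution_blocks (p := p)).
- by case=> j x; have [sK _] := coalition_swapP (s_ok j); rewrite /p /= sK.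
- case=> j x; rewrite moved /= => xs.
  have [_ /(_ x xs) /andP[adj_x Px]] := coalition_swapP (s_ok j).
  by rewrite /copies_adj /= eqxx adj_x inE.
- move=> i; rewrite inE => /gainP /leq_trans; apply; rewrite /utility.
  have -> : [set v in setT | (copies_org v == i) && (v \in [set v | p v != v])] =
            [set v | (owner v.2 == i) && (s v.1 v.2 != v.2)].
    by apply/setP=> v; rewrite !inE moved.
  rewrite (card_set_prod (fun j x => (owner x == i) && (s j x != x))).
  by apply: eq_leq; apply: eq_bigr => j _; rewrite card_gadget.
Qed.

End Copies.

Lemma cyclic_bounds_sum t (u : 'I_3 -> nat) :
  (forall i, 2 * t <= u i) ->
  (forall i Y, Y <= t -> 3 * t <= u i + Y \/ 3 * t + Y <= u (i + 1)%R) ->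
  9 * t <= (\sum_i u i).+1.
Proof.
move=> solo pair.
have -> : \sum_i u i = u 0%R + u 1%R + u 2%R.
  by rewrite !big_ord_recl big_ord0 addn0 addnA; congr (u _ + u _ + u _); apply: val_inj.
have next0 : (0 + 1)%R = 1%R :> 'I_3 by apply: val_inj.
have next1 : (1 + 1)%R = 2%R :> 'I_3 by apply: val_inj.
have next2 : (2 + 1)%R = 0%R :> 'I_3 by apply: val_inj.
(* With [Y := 3t - 1 - u i] the first alternative fails. *)
have := pair 0%R (3 * t - 1 - u 0%R); have := pair 1%R (3 * t - 1 - u 1%R).
have := pair 2%R (3 * t - 1 - u 2%R); rewrite next0 next1 next2.
have := solo 0%R; have := solo 1%R; have := solo 2%R; lia.
Qed.

Section Core.
Variables (t k : nat) (f : 'I_k -> {set 'I_t * gadget}).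
Variable M : {set {set ('I_t * gadget + 'I_k)}}.
Hypothesis coreM : in_suppl_core (@copies_org t) setT (@copies_adj t) f M.

Let u i := utility (@copies_org t) setT i (covered_V M).

Lemma core_solo_bound i : 2 * t <= u i.
Proof.
rewrite leqNgt; apply/negP => small.
have /andP[s_ok /eqP s_gain] := solo_swap_spec i.
apply: (coreM.2 [set j | pred1 i j]); first by apply/set0Pn; exists i; rewrite inE /= eqxx.
apply: (copies_blocks (s := fun=> solo_swap i)) => // _ /eqP ->.
by rewrite sum_nat_const card_ord s_gain mulnC.
Qed.

Lemma core_pair_bound i Y : Y <= t -> 3 * t <= u i + Y \/ 3 * t + Y <= u (i + 1)%R.
Proof.
move=> Y_le_t; case: (leqP (3 * t) (u i + Y)) => [|small_i]; [by left | right].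
rewrite leqNgt; apply/negP => small_j.
have /and3P[ok1 /eqP g1i /eqP g1j] := balanced_pair_swap_spec i.
have /and3P[ok2 /eqP g2i /eqP g2j] := skewed_pair_swap_spec i.
pose s (j : 'I_t) := if j < Y then pair_swap i 2%R else pair_swap i 1%R.
have gain_s x : \sum_j gain x (s j) =
    Y * gain x (pair_swap i 2%R) + (t - Y) * gain x (pair_swap i 1%R).
  by rewrite -sum_threshold //; apply: eq_bigr => j _; rewrite /s; case: ifP.
apply: (coreM.2 [set x | pred2 i (i + 1)%R x]).
  by apply/set0Pn; exists i; rewrite !inE eqxx.
apply: (copies_blocks (s := s)) => [j | x /orP[] /eqP ->]; first by rewrite /s; case: ifP.
- by rewrite gain_s g1i g2i; move: small_i; rewrite /u; lia.
- by rewrite gain_s g1j g2j; move: small_j; rewrite /u; lia.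
Qed.

Lemma core_covered_bound : \sum_i u i + 4 * t <= 12 * t + k.
Proof.
rewrite /u sum_utility_setT.
have := card_covered_odd_blocks (@copies_adj_sym t) (@copies_adj_irr t) coreM.1
  (blk := fun v => (v.1, v.2.1)).
rewrite !card_prod !card_option !card_ord mulnC [12 * t]mulnC; apply.
  by move=> [j x] [j' y] /andP[/eqP /= <- /andP[/eqP <- _]].
move=> [j r]; rewrite (_ : [set v | _] = setX [set j] (setX [set r] setT)).
  by rewrite !cardsX !cards1 cardsT card_ord.
by apply/setP=> -[j' [r' c]]; rewrite !inE xpair_eqE andbT.
Qed.

Lemma core_needs_donors : t <= k.+1.
Proof.
have := cyclic_bounds_sum core_solo_bound core_pair_bound.
have := core_covered_bound; rewrite /u; lia.
Qed.

End Core.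

Theorem mainTheorem2 :
  forall m : nat,
  exists (V : finType) (org : V -> 'I_3) (U : {set V}) (e : rel V),
    symmetric e /\ irreflexive e /\ m <= #|V| /\
    ~ suppl_core_nonempty org U e (#|V|%:R / 18 - 3)%R.
Proof.
move=> m; exists ('I_m * gadget)%type, (@copies_org m), setT, (@copies_adj m).
have cardV : #|{: 'I_m * gadget}| = 12 * m by rewrite !card_prod card_option !card_ord mulnC.
split; first exact: copies_adj_sym.
split; first exact: copies_adj_irr.
split; first by rewrite cardV leq_pmull.
case=> k [f [M [k_le coreM]]].
have := core_needs_donors coreM.
have : 18 * k + 54 <= 12 * m.
  by rewrite -(ler_nat rat) natrD !natrM; move: k_le; rewrite cardV natrM; lra.
lia.
Qed.
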